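(* Let $\mathbb{K}$ be a field and $n\geq 1$. (1) For non-empty subsets $I,J$ of $\{1,\dots,n\}$, the spaces $\mathcal{V}^{(1^\star)}_I$ and $\mathcal{V}^{(1^\star)}_J$ are similar if and only if $I=J$. (2) For non-empty proper subsets $I,J$ of $\{1,\dots,n\}$, the spaces $\mathcal{V}^{(2)}_I$ and $\mathcal{V}^{(2)}_J$ are similar if and only if $I=J$ or $I=\{1,\dots,n\}\setminus J$.
   Context: Two subsets $\mathcal{V},\mathcal{W}$ of $M_n(\mathbb{K})$ are similar if $\mathcal{W}=P\mathcal{V}P^{-1}$ for some invertible $P$. $\mathrm{NT}_n(\mathbb{K})$ is the space of strictly upper-triangular $n\times n$ matrices. For a non-empty $I\subset\{1,\dots,n\}$, $D_I$ is the diagonal matrix with $(i,i)$ entry $1$ for $i\in I$ and $0$ otherwise. $\mathcal{V}^{(1^\star)}_I:=\mathbb{K}D_I\oplus\mathrm{NT}_n(\mathbb{K})$, and for $I\neq\{1,\dots,n\}$, $\mathcal{V}^{(2)}_I:=\mathbb{K}I_n\oplus\mathbb{K}D_I\oplus\mathrm{NT}_n(\mathbb{K})$. *)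

From HB Require Import structures.
From mathcomp Require Import all_boot all_order all_algebra.
Set Implicit Arguments. Unset Strict Implicit. Unset Printing Implicit Defensive.
Import GRing.Theory.
Local Open Scope ring_scope.

(* Index set {1,...,n} is rendered as 'I_n = {0,...,n-1}. Subsets of M_n(K) are predicates. *)

Definition similar_sets (K : fieldType) (n : nat)
  (V W : 'M[K]_n -> Prop) : Prop :=
  exists P : 'M[K]_n, P \in unitmx /\
    (forall M : 'M[K]_n, W M <-> exists A : 'M[K]_n, V A /\ M = P *m A *m invmx P).

Definition strictly_upper (K : fieldType) (n : nat) (N : 'M[K]_n) : Prop :=
  forall i j : 'I_n, (j <= i)%N -> N i j = 0.

Definition diagI (K : fieldType) (n : nat) (I : {set 'I_n}) : 'M[K]_n :=
  \matrix_(i, j) ((i == j) && (i \in I))%:R.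

Definition V1star (K : fieldType) (n : nat) (I : {set 'I_n}) (M : 'M[K]_n) : Prop :=
  exists (a : K) (N : 'M[K]_n), strictly_upper N /\ M = a *: diagI K I + N.

Definition V2 (K : fieldType) (n : nat) (I : {set 'I_n}) (M : 'M[K]_n) : Prop :=
  exists (a b : K) (N : 'M[K]_n),
    strictly_upper N /\ M = a%:M + b *: diagI K I + N.

Arguments V1star K {n} I M.
Arguments V2 K {n} I M.

From HB Require Import structures.
From mathcomp Require Import all_boot all_order all_algebra.
From mathcomp Require Import zify ring.
Set Implicit Arguments. Unset Strict Implicit. Unset Printing Implicit Defensive.
Import GRing.Theory.
Local Open Scope ring_scope.

(* Call a subset V of M_n(K) nil-triangular when it contains every elementary
   matrix E_kl with k < l and every M in V with M^2 = 0 is strictly upper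
   triangular.  Both families of spaces are nil-triangular (the diagonal of an
   element is a*1_J, resp. a + b*1_J, and M^2 = 0 kills it).  If P V P^-1 = W
   for nil-triangular V and W, then each P E_kl P^-1 (k < l) squares to zero,
   hence is strictly upper triangular, and this forces P to be upper
   triangular; symmetrically so is P^-1.  Conjugation by such a P preserves
   the diagonal of upper triangular matrices, so the diagonal of D_I must be
   the diagonal of an element of W: 1_I = a*1_J, resp. 1_I = a + b*1_J, for
   scalars a, b.  Elementary counting on indicator functions then gives I = J,
   resp. I = J or I = complement of J.  The converse implications hold because
   V^(2)_{~J} and V^(2)_J are the same set. *)

Section Triangular.
Variables (K : fieldType) (n : nat).
Implicit Types (A B X Y P Q : 'M[K]_n).

Definition upper_tri A := forall i j : 'I_n, (j < i)%N -> A i j = 0.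

Lemma strictly_upper_tri A : strictly_upper A -> upper_tri A.
Proof. by move=> hA i j /ltnW; apply: hA. Qed.

Lemma upper_triD A B : upper_tri A -> upper_tri B -> upper_tri (A + B).
Proof. by move=> hA hB i j hji; rewrite mxE hA // hB // addr0. Qed.

Lemma upper_triZ (a : K) A : upper_tri A -> upper_tri (a *: A).
Proof. by move=> hA i j hji; rewrite mxE hA // mulr0. Qed.

Lemma upper_tri_scalar (a : K) : upper_tri a%:M.
Proof. by move=> i j hji; rewrite mxE; case: eqP => // hij; move: hji; rewrite hij ltnn. Qed.

Lemma upper_tri_diagI (I : {set 'I_n}) : upper_tri (diagI K I).
Proof. by move=> i j hji; rewrite mxE; case: eqP => // hij; move: hji; rewrite hij ltnn. Qed.

Lemma upper_triM A B : upper_tri A -> upper_tri B -> upper_tri (A *m B).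
Proof.
move=> hA hB i j hji; rewrite mxE big1 // => m _.
case: (ltnP m i) => him; first by rewrite hA // mul0r.
by rewrite hB ?mulr0 // (leq_trans hji him).
Qed.

Lemma upper_tri_mul_diag A B j :
  upper_tri A -> upper_tri B -> (A *m B) j j = A j j * B j j.
Proof.
move=> hA hB; rewrite mxE (bigD1 j) //= big1 ?addr0 // => m hmj.
case: (ltngtP m j) => h; first by rewrite hA // mul0r.
  by rewrite hB // mulr0.
by move: hmj; rewrite (val_inj h) eqxx.
Qed.

Lemma upper_tri_sqr0_diag A j : upper_tri A -> A *m A = 0 -> A j j = 0.
Proof.
move=> hA hAA; have := upper_tri_mul_diag j hA hA.
by rewrite hAA mxE => /esym/eqP; rewrite mulf_eq0 orbb => /eqP.
Qed.

Lemma conj_upper_tri_diag P Q A j :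
  upper_tri P -> upper_tri Q -> P *m Q = 1%:M -> upper_tri A ->
  (P *m A *m Q) j j = A j j.
Proof.
move=> hP hQ hPQ hA.
have hPQjj : P j j * Q j j = 1.
  by rewrite -upper_tri_mul_diag // hPQ mxE eqxx.
have hPA : upper_tri (P *m A) by apply: upper_triM.
by rewrite !upper_tri_mul_diag // mulrAC hPQjj mul1r.
Qed.

Lemma delta_strictly_upper (k l : 'I_n) :
  (k < l)%N -> strictly_upper (delta_mx k l : 'M[K]_n).
Proof.
move=> hkl i j hji; rewrite mxE.
case: (i =P k) => [hi | _] //; case: (j =P l) => [hj | _]; last by rewrite andbF.
by move: hji; rewrite hi hj leqNgt hkl.
Qed.

Lemma conj_delta_sqr0 X Y (k l : 'I_n) : Y *m X = 1%:M -> (k < l)%N ->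
  let M := X *m delta_mx k l *m Y in M *m M = 0.
Proof.
move=> hYX hkl /=; rewrite -!mulmxA (mulmxA Y) hYX mul1mx !mulmxA.
rewrite -(mulmxA X) mul_delta_mx_0 ?mulmx0 ?mul0mx //.
by rewrite -(inj_eq val_inj) /= neq_ltn hkl orbT.
Qed.

Lemma conj_delta_entry X Y (k l i j : 'I_n) :
  (X *m delta_mx k l *m Y) i j = X i k * Y l j.
Proof.
rewrite !mxE (bigD1 l) //= big1 ?addr0.
  rewrite !mxE (bigD1 k) //= big1 ?addr0; first by rewrite !mxE !eqxx mulr1.
  by move=> m /negbTE hm; rewrite mxE hm mulr0.
move=> m /negbTE hm; rewrite !mxE big1 ?mul0r // => p _.
by rewrite mxE hm andbF mulr0.
Qed.

(* Descending induction on the row i: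
   if X i k != 0 with k < i, strict triangularity of X E_{k,k+1} Y in row i
   kills the entries Y (k+1) j for j <= i, and the induction hypothesis kills
   X p (k+1) for p > i, so (Y X) (k+1) (k+1) = 0, which is absurd. *)
Lemma upper_of_conj_deltas X Y : Y *m X = 1%:M ->
  (forall k l : 'I_n, (k < l)%N -> strictly_upper (X *m delta_mx k l *m Y)) ->
  upper_tri X.
Proof.
move=> hYX hS.
suff lower_rows m (i k : 'I_n) : (n - m <= i)%N -> (k < i)%N -> X i k = 0.
  by move=> i k; apply: (lower_rows n); rewrite subnn.
elim: m i k => [|m IH] i k hi hki.
  by move: hi; rewrite subn0 leqNgt ltn_ord.
apply/eqP/negPn/negP => hX.
have hk1 : (k.+1 < n)%N by apply: leq_ltn_trans hki (ltn_ord i).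
pose k1 := Ordinal hk1.
have hY (j : 'I_n) : (j <= i)%N -> Y k1 j = 0.
  move=> hj; have := hS k k1 (ltnSn k) i j hj.
  by rewrite conj_delta_entry => /eqP; rewrite mulf_eq0 (negbTE hX) => /eqP.
have : (Y *m X) k1 k1 = 0.
  rewrite mxE big1 // => p _.
  case: (leqP p i) => hp; first by rewrite hY // mul0r.
  by rewrite (IH p k1) ?mulr0 //; move: hi hp hki => /=; lia.
by rewrite hYX mxE eqxx => /eqP; rewrite oner_eq0.
Qed.

End Triangular.

Section Similarity.
Variables (K : fieldType) (n : nat).
Implicit Types (V W : 'M[K]_n -> Prop) (A P : 'M[K]_n).

Definition nil_triangular V :=
  (forall k l : 'I_n, (k < l)%N -> V (delta_mx k l)) /\
  (forall M, V M -> M *m M = 0 -> strictly_upper M).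

Lemma conjugator_upper_tri V W P :
  nil_triangular V -> nil_triangular W -> P \in unitmx ->
  (forall M, W M <-> exists A, V A /\ M = P *m A *m invmx P) ->
  upper_tri P /\ upper_tri (invmx P).
Proof.
move=> [dV sV] [dW sW] hP hsim; split.
  apply: (upper_of_conj_deltas (mulVmx hP)) => k l hkl.
  apply: sW; last exact: conj_delta_sqr0 (mulVmx hP) hkl.
  by apply/hsim; exists (delta_mx k l); split => //; apply: dV.
apply: (upper_of_conj_deltas (mulmxV hP)) => k l hkl.
have [A [hA hE]] := (hsim (delta_mx k l)).1 (dW k l hkl).
have hconj : invmx P *m delta_mx k l *m P = A.
  by rewrite hE !mulmxA mulVmx // mul1mx -mulmxA mulVmx // mulmx1.
rewrite hconj; apply: sV => //.
by rewrite -hconj; apply: conj_delta_sqr0 (mulmxV hP) hkl.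
Qed.

Lemma similar_diag V W A :
  nil_triangular V -> nil_triangular W -> similar_sets V W ->
  V A -> upper_tri A -> exists2 B, W B & forall j, B j j = A j j.
Proof.
move=> nV nW [P [hP hsim]] hA uA.
have [uP uQ] := conjugator_upper_tri nV nW hP hsim.
exists (P *m A *m invmx P); first by apply/hsim; exists A.
by move=> j; apply: conj_upper_tri_diag (mulmxV hP) uA.
Qed.

Lemma similar_sets_ext V W : (forall M, V M <-> W M) -> similar_sets V W.
Proof.
move=> hVW; exists 1%:M; split; first exact: unitmx1.
move=> M; rewrite invmx1; split.
  by move=> /hVW hM; exists M; rewrite mul1mx mulmx1.
by case=> A [/hVW hA ->]; rewrite mul1mx mulmx1.
Qed.

End Similarity.

Section Spaces.
Variables (K : fieldType) (n : nat).
Implicit Types (J : {set 'I_n}) (N : 'M[K]_n).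

Lemma V1star_diag_entry (a : K) N J j : strictly_upper N ->
  (a *: diagI K J + N) j j = a * (j \in J)%:R.
Proof. by move=> hN; rewrite mxE (hN j j) // addr0 !mxE eqxx. Qed.

Lemma V2_diag_entry (a b : K) N J j : strictly_upper N ->
  (a%:M + b *: diagI K J + N) j j = a + b * (j \in J)%:R.
Proof. by move=> hN; rewrite mxE (hN j j) // addr0 !mxE eqxx mulr1n. Qed.

Lemma setC_neq0 J : J != setT -> ~: J != set0.
Proof. by apply: contraNneq => hC; rewrite -(setCK J) hC setC0. Qed.

Lemma exists_notin J : J != setT -> exists j, j \notin J.
Proof. by move=> /setC_neq0/set0Pn[j]; rewrite in_setC; exists j. Qed.

Lemma nil_triangular_V1star J : J != set0 -> nil_triangular (V1star K J).
Proof.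
move=> /set0Pn[j hj]; split.
  move=> k l hkl; exists 0, (delta_mx k l).
  by rewrite scale0r add0r; split => //; apply: delta_strictly_upper.
move=> _ [a [N [hN ->]]] hsq.
have hu : upper_tri (a *: diagI K J + N).
  by apply: upper_triD; [apply/upper_triZ/upper_tri_diagI | exact: strictly_upper_tri].
have := upper_tri_sqr0_diag j hu hsq.
by rewrite V1star_diag_entry // hj mulr1 => ->; rewrite scale0r add0r.
Qed.

Lemma nil_triangular_V2 J : J != set0 -> J != setT -> nil_triangular (V2 K J).
Proof.
move=> /set0Pn[j hj] /exists_notin[j' hj']; split.
  move=> k l hkl; exists 0, 0, (delta_mx k l).
  rewrite scale0r -scalemx1 scale0r !add0r; split => //.
  exact: delta_strictly_upper.
move=> _ [a [b [N [hN ->]]]] hsq.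
have hu : upper_tri (a%:M + b *: diagI K J + N).
  apply: upper_triD; last exact: strictly_upper_tri.
  by apply: upper_triD; [exact: upper_tri_scalar | apply/upper_triZ/upper_tri_diagI].
have diag0 i : a + b * (i \in J)%:R = 0.
  by rewrite -(V2_diag_entry _ _ _ _ hN); apply: upper_tri_sqr0_diag hsq.
have ha : a = 0 by have := diag0 j'; rewrite (negbTE hj') mulr0 addr0.
have hb : b = 0 by have := diag0 j; rewrite ha hj add0r mulr1.
by rewrite ha hb scale0r -scalemx1 scale0r !add0r.
Qed.

Lemma diagI_V1star J : V1star K J (diagI K J).
Proof. by exists 1, 0; rewrite scale1r addr0; split => // i j; rewrite mxE. Qed.

Lemma diagI_V2 J : V2 K J (diagI K J).
Proof.
exists 0, 1, 0; rewrite scale1r addr0 -scalemx1 scale0r add0r.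
by split => // i j; rewrite mxE.
Qed.

(* a I_n + b D_{~J} = (a + b) I_n - b D_J, so V2 ~J and V2 J coincide. *)
Lemma V2_setC J M : V2 K (~: J) M <-> V2 K J M.
Proof.
have hC (a b : K) : a%:M + b *: diagI K (~: J) = (a + b)%:M + (- b) *: diagI K J.
  apply/matrixP => i j; rewrite !mxE in_setC.
  case: eqP => _ /=; last by rewrite !mulr0.
  by case: (i \in J); rewrite /= ?mulr1n ?mulr0n; ring.
split; case=> a [b [N [hN ->]]].
  by exists (a + b), (- b), N; rewrite hC.
by exists (a + b), (- b), N; rewrite hC addrK opprK.
Qed.

End Spaces.

Section Indicators.
Variables (K : fieldType) (n : nat).
Implicit Types I J : {set 'I_n}.

Lemma indicator_scaled I J (a : K) : I != set0 ->
  (forall j, (j \in I)%:R = a * (j \in J)%:R) -> I = J.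
Proof.
move=> /set0Pn[i hi] hIJ.
have ha : a = 1.
  move: (hIJ i); rewrite hi; case: (i \in J); rewrite ?mulr1 // mulr0.
  by move/eqP; rewrite oner_eq0.
apply/setP => j; move: (hIJ j); rewrite ha mul1r.
by case: (j \in I); case: (j \in J) => // /eqP; rewrite ?oner_eq0 // eq_sym oner_eq0.
Qed.

(* If 1_I = a + b 1_J for I and J proper and nonempty, then I = J or I = ~J:
   a point outside J gives a in {0, 1}; when a = 1 pass to complements. *)
Lemma indicator_affine I J (a b : K) : I != set0 -> I != setT -> J != setT ->
  (forall j, (j \in I)%:R = a + b * (j \in J)%:R) -> I = J \/ I = ~: J.
Proof.
move=> hI hIT /exists_notin[j hj] hIJ.
have := hIJ j; rewrite (negbTE hj) mulr0 addr0; case: (j \in I) => ha.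
  right; rewrite -[I]setCK; congr (~: _).
  apply: (@indicator_scaled _ _ (- b)) => [|i]; first exact: setC_neq0.
  have -> : - b * (i \in J)%:R = true%:R - (a + b * (i \in J)%:R).
    by rewrite ha; ring.
  by rewrite -hIJ in_setC; case: (i \in I); rewrite ?subrr ?subr0.
left; apply: (@indicator_scaled _ _ b) => // i.
by rewrite hIJ -ha add0r.
Qed.

End Indicators.

Lemma V1star_similar_iff (K : fieldType) (n : nat) (I J : {set 'I_n}) :
  I != set0 -> J != set0 -> similar_sets (V1star K I) (V1star K J) <-> I = J.
Proof.
move=> hI hJ; split; last by move=> ->; exact: similar_sets_ext.
move=> hsim.
have [B [a [N [hN ->]]] hdiag] := similar_diag (nil_triangular_V1star K hI)
  (nil_triangular_V1star K hJ) hsim (diagI_V1star K I) (upper_tri_diagI K I).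
apply: (@indicator_scaled K _ _ _ a hI) => j.
by rewrite -(V1star_diag_entry _ _ _ hN) hdiag mxE eqxx.
Qed.

Lemma V2_similar_iff (K : fieldType) (n : nat) (I J : {set 'I_n}) :
  I != set0 -> J != set0 -> I != setT -> J != setT ->
  similar_sets (V2 K I) (V2 K J) <-> I = J \/ I = ~: J.
Proof.
move=> hI hJ hIT hJT; split; last first.
  by case=> ->; apply: similar_sets_ext => // M; apply: V2_setC.
move=> hsim.
have [B [a [b [N [hN ->]]]] hdiag] := similar_diag (nil_triangular_V2 K hI hIT)
  (nil_triangular_V2 K hJ hJT) hsim (diagI_V2 K I) (upper_tri_diagI K I).
apply: (@indicator_affine K _ _ _ a b hI hIT hJT) => j.
by rewrite -(V2_diag_entry _ _ _ _ hN) hdiag mxE eqxx.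
Qed.

Theorem mainTheorem3 (K : fieldType) (n : nat) (hn : (0 < n)%N) :
  (forall I J : {set 'I_n}, I != set0 -> J != set0 ->
     (similar_sets (V1star K I) (V1star K J) <-> I = J)) /\
  (forall I J : {set 'I_n}, I != set0 -> J != set0 ->
     I != setT -> J != setT ->
     (similar_sets (V2 K I) (V2 K J) <-> (I = J \/ I = ~: J))).
Proof.
split; [exact: V1star_similar_iff | exact: V2_similar_iff].
Qed.
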